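(* Let $k\ge3$ and $1\le s\le k$, $\mathbf n=(n_1,\dots,n_k)$, $r\le\min\{n_1,\dots,n_s\}$. If a tensor $\mathcal A\in P_s(\mathbf n,r)$ has a decomposition $\mathcal A=\sum_{i=1}^r\sigma_i\mathbf a^{(1)}_i\otimes\cdots\otimes\mathbf a^{(k)}_i$ of the type defining $P_s(\mathbf n,r)$ in which the factor matrices $A^{(l)}=[\mathbf a^{(l)}_1,\dots,\mathbf a^{(l)}_r]$, $l=s+1,\dots,k$, have full column rank, then $\mathcal A$ is identifiable. Moreover, if $s\ge3$, then every tensor in $P_s(\mathbf n,r)$ is identifiable.
   Context: $P_s(\mathbf n,r)$ is the set of tensors $\sum_{i=1}^r\sigma_i\mathbf a^{(1)}_i\otimes\cdots\otimes\mathbf a^{(k)}_i$ with $\sigma_i\in\mathbb R$, all $\mathbf a^{(l)}_i\in\mathbb R^{n_l}$ unit vectors, and for each $l\le s$ the vectors $\mathbf a^{(l)}_1,\dots,\mathbf a^{(l)}_r$ pairwise orthogonal. The rank of a tensor is the least $m$ such that it is a sum of $m$ rank-one tensors $\lambda_j\mathbf u^{(1)}_j\otimes\cdots\otimes\mathbf u^{(k)}_j$; a rank decomposition uses exactly the rank many terms. A tensor is identifiable if its rank decomposition is essentially unique: any two rank decompositions $\sum_j\lambda_j\mathbf u^{(1)}_j\otimes\cdots\otimes\mathbf u^{(k)}_j=\sum_j\mu_j\mathbf v^{(1)}_j\otimes\cdots\otimes\mathbf v^{(k)}_j$ differ by a permutation $\sigma$ of the terms and nonzero rescalings $\mathbf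 v^{(i)}_{\sigma(j)}=\alpha^{(i)}_j\mathbf u^{(i)}_j$ with $(\prod_i\alpha^{(i)}_j)\mu_{\sigma(j)}=\lambda_j$. *)

From HB Require Import structures.
From mathcomp Require Import all_boot all_order all_algebra all_fingroup.
From mathcomp Require Import reals.
Set Implicit Arguments. Unset Strict Implicit. Unset Printing Implicit Defensive.
Import Order.TTheory GRing.Theory Num.Theory.
Local Open Scope ring_scope.

Section Tensors.
Variable R : realType.
Variable k : nat.
Variable n : 'I_k -> nat.

Definition tindex := forall l : 'I_k, 'I_(n l).
Definition tensor := tindex -> R.

Definition vfam := forall l : 'I_k, 'I_(n l) -> R.

Definition dotv (p : nat) (v w : 'I_p -> R) : R := \sum_(i < p) v i * w i.
Definition unitv (p : nat) (v : 'I_p -> R) : Prop := dotv v v = 1.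

Definition tsum (m : nat) (lam : 'I_m -> R) (u : 'I_m -> vfam) : tensor :=
  fun i => \sum_(j < m) lam j * \prod_(l < k) u j l (i l).

Definition has_decomp (T : tensor) (m : nat) : Prop :=
  exists (lam : 'I_m -> R) (u : 'I_m -> vfam), tsum lam u = T.

Definition is_rank (T : tensor) (m : nat) : Prop :=
  has_decomp T m /\ forall m', has_decomp T m' -> (m <= m')%N.

Definition identifiable (T : tensor) : Prop :=
  forall (m : nat) (lam mu : 'I_m -> R) (u v : 'I_m -> vfam),
    is_rank T m -> tsum lam u = T -> tsum mu v = T ->
    exists (p : 'S_m) (alpha : 'I_m -> 'I_k -> R),
      forall j : 'I_m,
        (forall l, alpha j l != 0) /\
        (forall l (x : 'I_(n l)), v (p j) l x = alpha j l * u j l x) /\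
        (\prod_(l < k) alpha j l) * mu (p j) = lam j.

(* a decomposition of the type defining P_s(n,r): unit vectors, and for the
   first s modes (0-based indices l < s) pairwise orthogonal factor vectors *)
Definition Ps_decomp (s r : nat) (a : 'I_r -> vfam) : Prop :=
  (forall (i : 'I_r) (l : 'I_k), unitv (a i l)) /\
  (forall l : 'I_k, (l < s)%N ->
     forall i j : 'I_r, i != j -> dotv (a i l) (a j l) = 0).

Definition in_Ps (s r : nat) (T : tensor) : Prop :=
  exists (sigma : 'I_r -> R) (a : 'I_r -> vfam), Ps_decomp s a /\ tsum sigma a = T.

Definition factor_mx (r : nat) (a : 'I_r -> vfam) (l : 'I_k) : 'M[R]_(n l, r) :=
  \matrix_(x < n l, j < r) a j l x.

End Tensors.

From HB Require Import structures.
From mathcomp Require Import all_boot all_order all_algebra all_fingroup.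
From mathcomp Require Import reals ring.
Import Order.TTheory GRing.Theory Num.Theory.
Local Open Scope ring_scope.
Set Implicit Arguments. Unset Strict Implicit. Unset Printing Implicit Defensive.

(* Pair every factor vector a_i^(l) with a dual vector d_i^(l)
   such that <d_i^(l), a_i^(l)> = 1 in every mode and <d_i^(l), a_j^(l)> = 0
   for i <> j in three modes: take d = a in orthogonal modes and the rows of
   the pseudo-inverse of A^(l) in modes of full column rank.  Any other
   decomposition of length m <= r yields the same values of the multilinear
   form w |-> <T, w_1 (x) ... (x) w_k>.  Evaluated at d_(i0) and d_(i1) in the
   first two modes and at d_t in the others, this gives matrices P, Q of the
   other decomposition with P diag(g_t) Q^T = sigma_t E_tt for every t; hence
   m = r and the columns of P and Q are supported on a common bijection, since
   a diagonal matrix of rank one has a single nonzero entry.  Evaluating with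
   a coordinate vector in one mode then exhibits every term of the other
   decomposition as a rescaling of a term sigma_i a_i. *)

Section SimultaneousDiagonalization.
Variable F : fieldType.

Lemma mulmx_diag_trmx_entry r m (P Q : 'M[F]_(r, m)) (g : 'rV[F]_m) i0 i1 :
  (P *m diag_mx g *m Q^T) i0 i1 = \sum_j P i0 j * Q i1 j * g 0 j.
Proof. by rewrite mul_mx_diag !mxE; apply: eq_bigr => j _; rewrite !mxE mulrAC. Qed.

Lemma mulmx_delta_entry r (X Y : 'M[F]_r) t a b :
  (X *m delta_mx t t *m Y) a b = X a t * Y t b.
Proof.
rewrite mxE (bigD1 t) //= big1 => [|c /negbTE ct]; last first.
  by rewrite mxE big1 ?mul0r // => c' _; rewrite mxE ct andbF mulr0.
rewrite addr0 mxE (bigD1 t) //= big1 => [|c /negbTE ct]; last by rewrite mxE ct mulr0.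
by rewrite mxE !eqxx mulr1 addr0.
Qed.

Lemma unitmx_col_neq0 r (X : 'M[F]_r) t : X \in unitmx -> exists a, X a t != 0.
Proof.
move=> Xu; apply/existsP; rewrite -negb_forall; apply/negP => /forallP X0.
move/matrixP/(_ t t): (mulVmx Xu); rewrite !mxE eqxx big1 => [/eqP|a _].
  by rewrite eq_sym oner_eq0.
by move/eqP: (X0 a) ->; rewrite mulr0.
Qed.

Lemma outer_diag_support r (x y : 'I_r -> F) a0 b0 :
  x a0 != 0 -> y b0 != 0 -> (forall a b, a != b -> x a * y b = 0) ->
  forall a, a != a0 -> x a = 0 /\ y a = 0.
Proof.
move=> xa0 yb0 offdiag.
have y0 b : b != a0 -> y b = 0.
  move=> ba0; apply/eqP; have := offdiag a0 b; rewrite eq_sym ba0 => /(_ isT) /eqP.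
  by rewrite mulf_eq0 (negbTE xa0).
have ya0 : y a0 != 0 by case: (eqVneq b0 a0) yb0 => [<- // | /y0 ->]; rewrite eqxx.
move=> a aa0; split; last exact: y0.
by apply/eqP; move/eqP: (offdiag a a0 aa0); rewrite mulf_eq0 (negbTE ya0) orbF.
Qed.

Lemma col_support_invmx r (X : 'M[F]_r) (pi : 'I_r -> 'I_r) :
  X \in unitmx -> (forall a t, a != pi t -> X a t = 0) ->
  injective pi /\ forall i t, i != t -> invmx X i (pi t) = 0.
Proof.
move=> Xu Xsupp.
have VX i t : invmx X i (pi t) * X (pi t) t = (i == t)%:R.
  move/matrixP/(_ i t): (mulVmx Xu); rewrite !mxE (bigD1 (pi t)) //= => <-.
  by rewrite big1 ?addr0 // => a /Xsupp ->; rewrite mulr0.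
have VX0 i t : i != t -> invmx X i (pi t) = 0.
  move=> it; apply/eqP; move/eqP: (VX i t); rewrite (negbTE it) mulf_eq0.
  case/orP => // /eqP X0; move: (VX t t); rewrite X0 mulr0 eqxx => /eqP.
  by rewrite eq_sym oner_eq0.
split=> // t t' eq_pi; apply/eqP; apply: contraT => tt'.
by move: (VX t t); rewrite eq_pi VX0 // mul0r eqxx => /eqP; rewrite eq_sym oner_eq0.
Qed.

Lemma unit_simultaneous_diag_support r (P Q : 'M[F]_r) (g : 'I_r -> 'rV[F]_r)
    (sig : 'I_r -> F) :
  P \in unitmx -> Q \in unitmx -> (forall t, sig t != 0) ->
  (forall t, P *m diag_mx (g t) *m Q^T = sig t *: delta_mx t t) ->
  exists2 pi : 'I_r -> 'I_r, injective pi &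
    forall i t, i != t -> P i (pi t) = 0 /\ Q i (pi t) = 0.
Proof.
move=> Pu Qu sig_neq0 slices.
pose X := invmx P; pose Y := invmx Q.
have [Xu Yu] : X \in unitmx /\ Y \in unitmx by rewrite !unitmx_inv.
have outer t a b : a != b -> X a t * Y b t = 0.
  move=> ab; have : diag_mx (g t) = X *m (sig t *: delta_mx t t) *m Y^T.
    by rewrite -slices trmx_inv !mulmxA mulVmx // mul1mx -mulmxA mulmxV ?unitmx_tr // mulmx1.
  move/matrixP/(_ a b); rewrite mxE (negbTE ab) mulr0n -scalemxAr -scalemxAl mxE.
  rewrite mulmx_delta_entry mxE => /esym/eqP.
  by rewrite mulf_eq0 (negbTE (sig_neq0 t)) => /eqP.
have single_support t : exists a0, forall a, a != a0 -> X a t = 0 /\ Y a t = 0.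
  have [a0 Xa0] := unitmx_col_neq0 t Xu; have [b0 Yb0] := unitmx_col_neq0 t Yu.
  exists a0; exact: (outer_diag_support (x := X^~ t) (y := Y^~ t) Xa0 Yb0 (outer t)).
have [pi supp] := fin_all_exists single_support.
have [pi_inj Psupp] := col_support_invmx Xu (fun a t a_ne => (supp t a a_ne).1).
have [_ Qsupp] := col_support_invmx Yu (fun a t a_ne => (supp t a a_ne).2).
rewrite !invmxK in Psupp Qsupp.
by exists pi => // i t it; rewrite Psupp ?Qsupp.
Qed.

Lemma simultaneous_diag_support r m (P Q : 'M[F]_(r, m)) (g : 'I_r -> 'rV[F]_m)
    (sig : 'I_r -> F) :
  (m <= r)%N -> (forall t, sig t != 0) ->
  (forall t, P *m diag_mx (g t) *m Q^T = sig t *: delta_mx t t) ->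
  exists e : 'I_m -> 'I_r, bijective e /\ forall i j, i != e j -> P i j = 0 /\ Q i j = 0.
Proof.
move=> le_mr sig_neq0 slices.
have sum_slices : P *m diag_mx (\sum_t g t) *m Q^T = diag_mx (\row_t sig t).
  rewrite linear_sum mulmx_sumr mulmx_suml (eq_bigr _ (fun t _ => slices t)).
  by rewrite diag_mx_sum_delta; apply: eq_bigr => t _; rewrite mxE.
have sig_unit : diag_mx (\row_t sig t) \in unitmx.
  by rewrite unitmxE det_diag unitfE; apply/prodf_neq0 => t _; rewrite mxE.
have eq_mr : m = r.
  apply/eqP; rewrite eqn_leq le_mr -{1}(mxrank_unit sig_unit) -sum_slices.
  by rewrite (leq_trans (mxrankM_maxl _ _)) // (leq_trans (mxrankM_maxl _ _)) ?rank_leq_col.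
subst m; move: sig_unit; rewrite -sum_slices !unitmx_mul unitmx_tr => /andP[/andP[Pu _] Qu].
have [pi pi_inj supp] := unit_simultaneous_diag_support Pu Qu sig_neq0 slices.
exists (invF pi_inj); split; first exact/injF_bij/(can_inj (f_invF pi_inj)).
by move=> i j; rewrite -{2 3}(f_invF pi_inj j) => /supp.
Qed.

End SimultaneousDiagonalization.

Section Dot.
Variable R : realType.

Lemma dotv_delta p (y : 'I_p) (v : 'I_p -> R) : dotv (fun z => (z == y)%:R) v = v y.
Proof.
by rewrite /dotv (bigD1 y) //= eqxx mul1r big1 ?addr0 // => z /negbTE ->; rewrite mul0r.
Qed.

Lemma dual_proportional p (s K : R) (w x y : 'I_p -> R) :
  (forall z, s * x z = K * y z) -> dotv w x = 1 -> s != 0 ->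
  K * dotv w y = s /\ dotv w y != 0 /\ forall z, y z = dotv w y * x z.
Proof.
move=> sxKy wx s_neq0.
have Kc : K * dotv w y = s.
  rewrite -[s]mulr1 -wx /dotv !mulr_sumr; apply: eq_bigr => z _.
  by rewrite mulrCA -sxKy mulrCA.
have : K * dotv w y != 0 by rewrite Kc.
rewrite mulf_eq0 negb_or => /andP[K_neq0 c_neq0].
split=> //; split=> // z; apply: (mulfI K_neq0).
by rewrite -sxKy -Kc mulrA.
Qed.

End Dot.

Section Contraction.
Variables (R : realType) (k : nat) (n : 'I_k -> nat).

Definition tsum_dot m (lam : 'I_m -> R) (u : 'I_m -> vfam R n) (w : vfam R n) : R :=
  \sum_(j < m) lam j * \prod_(l < k) dotv (w l) (u j l).

Lemma tsum_dot_term_eq0 m (c : 'I_m -> R) (z : 'I_m -> vfam R n) (w : vfam R n) j l :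
  dotv (w l) (z j l) = 0 -> c j * \prod_l' dotv (w l') (z j l') = 0.
Proof. by move=> dot0; rewrite (bigD1 l) //= dot0 mul0r mulr0. Qed.

Definition contract_mode (l : 'I_k) (w : 'I_(n l) -> R) (T : tensor R n) : tensor R n :=
  fun x => \sum_(y < n l) w y * T (@dfwith _ (fun l => 'I_(n l)) x l y).

Definition contract_modes (L : seq 'I_k) (w : vfam R n) (T : tensor R n) : tensor R n :=
  foldr (fun l => contract_mode (w l)) T L.

Lemma contract_modes_tsum (L : seq 'I_k) (w : vfam R n) m (lam : 'I_m -> R)
    (u : 'I_m -> vfam R n) (x : tindex n) :
  uniq L ->
  contract_modes L w (tsum lam u) x =
  \sum_j lam j * ((\prod_(l <- L) dotv (w l) (u j l)) * \prod_(l | l \notin L) u j l (x l)).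
Proof.
elim: L x => [|l L IH] x.
  move=> _; apply: eq_bigr => j _; rewrite big_nil mul1r.
  by congr (_ * _); apply: eq_bigl => l; rewrite in_nil.
case/andP=> lL uniqL.
rewrite [LHS]/= -/(contract_modes L w _) /contract_mode.
under eq_bigr do rewrite IH // mulr_sumr.
rewrite exchange_big /=; apply: eq_bigr => j _.
have split_l y : \prod_(l' | l' \notin L) u j l' (@dfwith _ (fun l => 'I_(n l)) x l y l')
    = u j l y * \prod_(l' | l' \notin l :: L) u j l' (x l').
  rewrite (bigD1 l) //= dfwith_in; congr (_ * _).
  apply: eq_big => l'; first by rewrite in_cons negb_or andbC eq_sym.
  by case/andP=> _ l'l; rewrite dfwith_out // eq_sym.
under eq_bigr do rewrite split_l.
by rewrite big_cons /dotv !mulr_suml mulr_sumr; apply: eq_bigr => y _; ring.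
Qed.

Lemma eq_tsum_dot m (lam : 'I_m -> R) (u : 'I_m -> vfam R n)
    m' (mu : 'I_m' -> R) (v : 'I_m' -> vfam R n) :
  tsum lam u = tsum mu v -> forall w, tsum_dot lam u w = tsum_dot mu v w.
Proof.
move=> eq_uv w.
(* With an empty mode both forms vanish; otherwise contract all modes at a base point. *)
have [l0 /eqP n0 | n_pos] := pickP (fun l => n l == 0%N).
  have dot0 (z : 'I_(n l0) -> R) : dotv (w l0) z = 0.
    by rewrite /dotv big1 // => y; have := ltn_ord y; rewrite [X in (_ < X)%N]n0.
  by rewrite /tsum_dot !big1 // => j _; rewrite (bigD1 l0) //= dot0 mul0r mulr0.
have n_gt0 l : (0 < n l)%N by rewrite lt0n n_pos.
pose x0 : tindex n := fun l => Ordinal (n_gt0 l).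
have contract_all m1 (c : 'I_m1 -> R) z :
    contract_modes (index_enum 'I_k) w (tsum c z) x0 = tsum_dot c z w.
  rewrite contract_modes_tsum ?index_enum_uniq //; apply: eq_bigr => j _.
  by rewrite [X in _ * (_ * X)]big1 ?mulr1 // => l; rewrite mem_index_enum.
by rewrite -!contract_all eq_uv.
Qed.

End Contraction.

Section Rigidity.
(* Otherwise the mode index of the [vfam]-valued variables would become implicit. *)
Local Unset Implicit Arguments.
Variables (R : realType) (k : nat) (n : 'I_k -> nat).
Hypothesis k_gt2 : (2 < k)%N.

Let l0 : 'I_k := Ordinal (ltn_trans (isT : 0 < 2)%N k_gt2).
Let l1 : 'I_k := Ordinal (ltn_trans (isT : 1 < 2)%N k_gt2).
Let l2 : 'I_k := Ordinal k_gt2.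
Let l1_l0 : l1 != l0. Proof. by []. Qed.
Let l2_l0 : l2 != l0. Proof. by []. Qed.
Let l2_l1 : l2 != l1. Proof. by []. Qed.

Let other_mode (l : 'I_k) : 'I_k := if l == l0 then l1 else l0.
Let other_mode_neq l : other_mode l != l.
Proof. by rewrite /other_mode; case: (eqVneq l l0) => [->|]; rewrite // eq_sym. Qed.
Let other_mode_lt3 l : (other_mode l < 3)%N.
Proof. by rewrite /other_mode; case: ifP. Qed.

Variables (r : nat) (sig : 'I_r -> R) (a d : 'I_r -> vfam R n).
Hypotheses (sig_neq0 : forall i, sig i != 0)
  (dual_diag : forall i (l : 'I_k), dotv (d i l) (a i l) = 1)
  (dual_offdiag : forall l : 'I_k, (l < 3)%N -> forall i j, i != j -> dotv (d i l) (a j l) = 0).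

Let dual_triple (i0 i1 t : 'I_r) : vfam R n :=
  fun l => d (if l == l0 then i0 else if l == l1 then i1 else t) l.

Let dual_slice (i : 'I_r) (l : 'I_k) (y : 'I_(n l)) : vfam R n :=
  @dfwith _ (fun l => 'I_(n l) -> R) (d i) l (fun z => (z == y)%:R).

Lemma tsum_dot_dual_triple i0 i1 t :
  tsum_dot sig a (dual_triple i0 i1 t) = sig t * ((i0 == t) && (i1 == t))%:R.
Proof.
rewrite /tsum_dot (bigD1 t) //= [X in _ + X]big1 ?addr0 => [|i it]; last first.
  apply: (tsum_dot_term_eq0 _ (l := l2)).
  by rewrite /dual_triple (negbTE l2_l0) (negbTE l2_l1) dual_offdiag // eq_sym.
have [<-|i0t] := eqVneq i0 t; last first.
  rewrite mulr0; apply: (tsum_dot_term_eq0 _ (l := l0)).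
  by rewrite /dual_triple eqxx dual_offdiag.
have [<-|i1t] := eqVneq i1 i0; last first.
  rewrite andbF mulr0; apply: (tsum_dot_term_eq0 _ (l := l1)).
  by rewrite /dual_triple (negbTE l1_l0) eqxx dual_offdiag.
by rewrite mulr1 big1 ?mulr1 // => l _; rewrite /dual_triple !if_same dual_diag.
Qed.

Lemma tsum_dot_dual_slice i l y : tsum_dot sig a (dual_slice i l y) = sig i * a i l y.
Proof.
rewrite /tsum_dot (bigD1 i) //= [X in _ + X]big1 ?addr0 => [|i' i'i]; last first.
  apply: (tsum_dot_term_eq0 _ (l := other_mode l)).
  rewrite /dual_slice dfwith_out; last by rewrite eq_sym other_mode_neq.
  by rewrite dual_offdiag ?other_mode_lt3 // eq_sym.
rewrite (bigD1 l) //= /dual_slice dfwith_in dotv_delta big1 ?mulr1 // => l' l'l.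
by rewrite dfwith_out ?dual_diag // eq_sym.
Qed.

Lemma decomposition_rigid m (lam : 'I_m -> R) (u : 'I_m -> vfam R n) :
  (m <= r)%N -> tsum lam u = tsum sig a ->
  exists e : 'I_m -> 'I_r, bijective e /\ forall j,
    lam j * \prod_l dotv (d (e j) l) (u j l) = sig (e j) /\
    forall l, dotv (d (e j) l) (u j l) != 0 /\
              forall x, u j l x = dotv (d (e j) l) (u j l) * a (e j) l x.
Proof.
move=> le_mr eq_ua; have dotE := eq_tsum_dot eq_ua.
pose P := \matrix_(i < r, j < m) dotv (d i l0) (u j l0).
pose Q := \matrix_(i < r, j < m) dotv (d i l1) (u j l1).
pose g (t : 'I_r) := \row_(j < m) (lam j * \prod_(l | (l != l0) && (l != l1)) dotv (d t l) (u j l)).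
have slices t : P *m diag_mx (g t) *m Q^T = sig t *: delta_mx t t.
  apply/matrixP => i0 i1; rewrite mulmx_diag_trmx_entry !mxE -tsum_dot_dual_triple -dotE.
  apply: eq_bigr => j _; rewrite !mxE [in RHS](bigD1 l0) //= [in RHS](bigD1 l1) //=.
  rewrite /dual_triple eqxx (negbTE l1_l0) eqxx [in RHS](eq_bigr (fun l => dotv (d t l) (u j l))).
    by ring.
  by move=> l /andP[/negbTE -> /negbTE ->].
have [e [e_bij e_supp]] := simultaneous_diag_support le_mr sig_neq0 slices.
exists e; split => // j; set i := e j.
have others j' : j' != j -> dotv (d i l0) (u j' l0) = 0 /\ dotv (d i l1) (u j' l1) = 0.
  move=> j'j; have := e_supp i j'; rewrite !mxE; apply.
  by rewrite /i (inj_eq (bij_inj e_bij)) eq_sym.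
have slice_eq l y :
    sig i * a i l y = (lam j * \prod_(l' | l' != l) dotv (d i l') (u j l')) * u j l y.
  rewrite -tsum_dot_dual_slice -dotE /tsum_dot (bigD1 j) //= [X in _ + X]big1 ?addr0 => [|j' j'j].
    rewrite [in LHS](bigD1 l) //= /dual_slice dfwith_in dotv_delta.
    rewrite [in LHS](eq_bigr (fun l' => dotv (d i l') (u j l'))) => [|l' l'l]; first by ring.
    by rewrite dfwith_out // eq_sym.
  apply: (tsum_dot_term_eq0 _ (l := other_mode l)).
  rewrite /dual_slice dfwith_out; last by rewrite eq_sym other_mode_neq.
  by have [h0 h1] := others j' j'j; rewrite /other_mode; case: ifP.
have rescale l := dual_proportional (slice_eq l) (dual_diag i l) (sig_neq0 i).
split; last by move=> l; have [_ []] := rescale l.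
by have [<- _] := rescale l0; rewrite (bigD1 l0) //=; ring.
Qed.

End Rigidity.

Lemma tsum_drop_zero_weights (R : realType) k (n : 'I_k -> nat) r (sig : 'I_r -> R)
    (a : 'I_r -> vfam R n) :
  exists r' (e : 'I_r' -> 'I_r),
    [/\ injective e, forall j, sig (e j) != 0 & tsum (sig \o e) (a \o e) = tsum sig a].
Proof.
pose S := [set i | sig i != 0].
exists #|S|, enum_val; split; first exact: enum_val_inj.
  by move=> j; have := enum_valP j; rewrite inE.
apply: boolp.funext => x; rewrite /tsum [RHS](bigID (mem S)) /= [X in _ + X]big1 ?addr0.
  exact: esym (big_enum_val _).
by move=> i; rewrite inE negbK => /eqP ->; rewrite mul0r.
Qed.

Lemma identifiable_of_duals (R : realType) k (n : 'I_k -> nat) r (sig : 'I_r -> R)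
    (a d : 'I_r -> vfam R n) :
  (2 < k)%N -> (forall i (l : 'I_k), dotv (d i l) (a i l) = 1) ->
  (forall l : 'I_k, (l < 3)%N -> forall i j, i != j -> dotv (d i l) (a j l) = 0) ->
  identifiable (tsum sig a).
Proof.
move=> k_gt2 dual_diag dual_offdiag m lam mu u v [_ rank_min] eq_u eq_v.
(* Rank minimality only bounds m by the number of nonzero weights, possibly < r. *)
have [r' [e [e_inj sig_neq0 eq_drop]]] := tsum_drop_zero_weights sig a.
have le_mr' : (m <= r')%N by apply: rank_min; exists (sig \o e), (a \o e).
have dual_offdiag' (l : 'I_k) : (l < 3)%N -> forall i j, i != j -> dotv (d (e i) l) (a (e j) l) = 0.
  by move=> l3 i j ij; rewrite dual_offdiag // (inj_eq e_inj).
have rigid := decomposition_rigid R k n k_gt2 r' (sig \o e) (a \o e) (d \o e) sig_neq0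
  (fun i => dual_diag (e i)) dual_offdiag' m.
have [eu [eu_bij rigid_u]] := rigid lam u le_mr' (etrans eq_u (esym eq_drop)).
have [ev [[ev' evK ev'K] rigid_v]] := rigid mu v le_mr' (etrans eq_v (esym eq_drop)).
pose p := perm (inj_comp (can_inj ev'K) (bij_inj eu_bij)).
have ev_p j : ev (p j) = eu j by rewrite permE /= ev'K.
pose scale_u j l := dotv (d (e (eu j)) l) (u j l).
exists p, (fun j l => dotv (d (e (eu j)) l) (v (p j) l) / scale_u j l) => j.
have [lam_u u_eq] := rigid_u j; have [mu_v v_eq] := rigid_v (p j).
rewrite /= in lam_u u_eq; rewrite /= ev_p in mu_v v_eq.
have scale_u_neq0 l : scale_u j l != 0 by have [] := u_eq l.
split; [|split].
- by move=> l; rewrite mulf_neq0 ?invr_eq0 //; have [] := v_eq l.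
- by move=> l x; have [_ ->] := v_eq l; have [_ ->] := u_eq l; rewrite mulrA divfK.
have prod_neq0 : \prod_l scale_u j l != 0 by apply/prodf_neq0 => l _.
by apply: (mulIf prod_neq0); rewrite prodf_div mulrAC divfK // mulrC mu_v -lam_u.
Qed.

Lemma dotv_pinvmx_factor (R : realType) k (n : 'I_k -> nat) r (a : 'I_r -> vfam R n) l i j :
  \rank (factor_mx a l) = r -> dotv (fun x => pinvmx (factor_mx a l) i x) (a j l) = (i == j)%:R.
Proof.
move=> rank_r; have full : row_full (factor_mx a l) by rewrite /row_full rank_r.
move/matrixP/(_ i j): (mulVpmx full); rewrite !mxE => <-.
by rewrite /dotv; apply: eq_bigr => x _; rewrite /factor_mx [X in _ = _ * X]mxE.
Qed.

Theorem proposition3p2 (R : realType) (k : nat) (n : 'I_k -> nat) (s r : nat) :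
  (3 <= k)%N -> (1 <= s <= k)%N ->
  (forall l : 'I_k, (l < s)%N -> (r <= n l)%N) ->
  (forall (sigma : 'I_r -> R) (a : 'I_r -> vfam R n),
      Ps_decomp s a ->
      (forall l : 'I_k, (s <= l)%N -> \rank (factor_mx a l) = r) ->
      identifiable (tsum sigma a))
  /\
  ((3 <= s)%N -> forall T : tensor R n, in_Ps s r T -> identifiable T).
Proof.
move=> k_ge3 _ _; split.
  move=> sigma a [a_unit a_orth] a_rank.
  pose d : 'I_r -> vfam R n := fun i l =>
    if (l < s)%N then a i l else fun x => pinvmx (factor_mx a l) i x.
  have biorth i j l : dotv (d i l) (a j l) = (i == j)%:R.
    rewrite /d; case: ifPn => [ls | sl].
      by have [<-|ij] := eqVneq i j; [exact: a_unit | exact: a_orth].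
    by rewrite -leqNgt in sl; exact: dotv_pinvmx_factor (a_rank l sl).
  apply: (identifiable_of_duals (d := d) k_ge3) => [i l | l _ i j ij].
    by rewrite biorth eqxx.
  by rewrite biorth (negbTE ij).
move=> s_ge3 T [sigma [a [[a_unit a_orth] <-]]].
apply: (identifiable_of_duals (d := a) k_ge3) => // l l3.
by apply: a_orth; exact: leq_trans l3 s_ge3.
Qed.
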